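(* Let $\Delta\ge1$, $p\ge1$ and $\alpha$ be positive integers. There is an infinite family of graphs of maximum degree $\Delta$ and an absolute constant $C>0$ such that for every graph $G=(V,E)$ in the family and every assignment of nonempty sets $L(v)\subseteq\{1,\dots,\alpha\}$ to vertices $v\in V$ with the property that every choice of one color $\ell_v\in L(v)$ for each $v$ yields a $p$-defective $\alpha$-coloring of $G$, we have $\min_{v\in V}|L(v)|\le C\alpha p/\Delta$, i.e. the solution domain has size $O(\alpha\cdot p/\Delta)$; consequently the contingency factor $\alpha/\min_v|L(v)|$ is $\Omega(\Delta/p)$.
   Context: A map $\varphi:V\to\{1,\dots,\alpha\}$ is a $p$-defective $\alpha$-coloring of $G=(V,E)$ if every vertex $v$ has at most $p$ neighbors $u$ with $\varphi(u)=\varphi(v)$. Solution domain size $=\min_v|L(v)|$; contingency factor $=\alpha/\min_v|L(v)|$. *)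

From mathcomp Require Import all_boot all_order all_algebra.
Set Implicit Arguments. Unset Strict Implicit. Unset Printing Implicit Defensive.

Record sgraph := SGraph {
  gn : nat;
  gadj : rel 'I_gn;
  gadj_sym : symmetric gadj;
  gadj_irr : irreflexive gadj }.

Definition deg (G : sgraph) (v : 'I_(gn G)) : nat := #|[set u | @gadj G v u]|.

Definition maxdeg (G : sgraph) : nat := \max_(v : 'I_(gn G)) deg v.

(* phi : V -> colours 'I_alpha (colours {1..alpha} relabelled as {0..alpha-1})
   is p-defective: every vertex has at most p neighbours of its own colour. *)
Definition p_defective (G : sgraph) (p alpha : nat) (phi : 'I_(gn G) -> 'I_alpha) :=
  forall v : 'I_(gn G), #|[set u | @gadj G v u && (phi u == phi v)]| <= p.

(* solution domain size min_v |L(v)| (default alpha for the empty vertex set,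
   which never occurs for graphs of maximum degree >= 1). *)
Definition sol_domain_size (G : sgraph) (alpha : nat) (L : 'I_(gn G) -> {set 'I_alpha}) : nat :=
  \big[minn/alpha]_(v : 'I_(gn G)) #|L v|.

From mathcomp Require Import all_boot all_order all_algebra.
From mathcomp Require Import zify.
Import Order.TTheory GRing.Theory Num.Theory.

Set Implicit Arguments.
Unset Strict Implicit.
Unset Printing Implicit Defensive.

(* The family is K_(Delta+1) padded with isolated vertices.  On a clique A,
   colouring every vertex by a colour c whenever c is in its list shows that
   at most p+1 vertices of A can list c; double counting the pairs (v, c) with
   v in A and c in L v then gives (Delta+1) min_v |L v| <= alpha (p+1),
   whence min_v |L v| <= 2 alpha p / Delta. *)

Definition clique_adj n (A : {set 'I_n}) : rel 'I_n :=
  fun u v => [&& u != v, u \in A & v \in A].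

Lemma clique_adj_sym n (A : {set 'I_n}) : symmetric (clique_adj A).
Proof. by move=> u v; rewrite /clique_adj eq_sym [(u \in A) && _]andbC. Qed.

Lemma clique_adj_irr n (A : {set 'I_n}) : irreflexive (clique_adj A).
Proof. by move=> u; rewrite /clique_adj eqxx. Qed.

Definition clique_graph n (A : {set 'I_n}) :=
  SGraph (@clique_adj_sym n A) (@clique_adj_irr n A).

Lemma deg_clique_graph n (A : {set 'I_n}) (v : 'I_n) :
  @deg (clique_graph A) v = if v \in A then #|A|.-1 else 0.
Proof.
rewrite /deg /=; case: ifP => vA.
  have -> : [set u | clique_adj A v u] = A :\ v.
    by apply/setP => u; rewrite !inE /clique_adj vA eq_sym.
  by rewrite (cardsD1 v A) vA.
suff -> : [set u | clique_adj A v u] = set0 by rewrite cards0.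
by apply/setP => u; rewrite !inE /clique_adj vA andbF.
Qed.

Lemma maxdeg_clique_graph n (A : {set 'I_n}) :
  A != set0 -> maxdeg (clique_graph A) = #|A|.-1.
Proof.
case/set0Pn => v vA; apply/eqP; rewrite eqn_leq; apply/andP; split.
  by apply/bigmax_leqP => u _; rewrite deg_clique_graph; case: ifP.
by have := @leq_bigmax _ (@deg (clique_graph A)) v; rewrite deg_clique_graph vA.
Qed.

Lemma exists_set_card n k : k <= n -> exists A : {set 'I_n}, #|A| = k.
Proof.
move=> le_kn; exists [set widen_ord le_kn i | i in 'I_k].
rewrite card_imset ?card_ord // => i j eq_ij.
by apply: val_inj; exact: (congr1 val eq_ij).
Qed.

Definition greedy_choice (T C : finType) (c : C) (L : T -> {set C}) (v : T) : C :=
  if c \in L v then c else odflt c [pick x in L v].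

Lemma greedy_choice_in (T C : finType) (c : C) (L : T -> {set C}) (v : T) :
  L v != set0 -> greedy_choice c L v \in L v.
Proof.
rewrite /greedy_choice; case: ifP => // _ /set0Pn [x xL].
by case: pickP => [//|/(_ x)]; rewrite xL.
Qed.

Definition is_clique (G : sgraph) (A : {set 'I_(gn G)}) :=
  {in A &, forall u v, u != v -> gadj u v}.

Lemma is_clique_graph n (A : {set 'I_n}) : @is_clique (clique_graph A) A.
Proof. by move=> u v uA vA uv; rewrite /= /clique_adj uv uA vA. Qed.

Lemma sol_domain_size_le (G : sgraph) alpha (L : 'I_(gn G) -> {set 'I_alpha}) v :
  sol_domain_size L <= #|L v|.
Proof. by rewrite /sol_domain_size -minEnat; exact: (@bigmin_le _ nat). Qed.

Section CliqueListColouring.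

Variables (G : sgraph) (p alpha : nat) (L : 'I_(gn G) -> {set 'I_alpha}).
Hypothesis L_neq0 : forall v, L v != set0.
Hypothesis L_defective :
  forall phi, (forall v, phi v \in L v) -> @p_defective G p alpha phi.
Variable A : {set 'I_(gn G)}.
Hypothesis A_clique : is_clique A.

Lemma card_clique_listing_le (c : 'I_alpha) : #|[set v in A | c \in L v]| <= p.+1.
Proof.
set S := [set v in A | c \in L v].
have [-> | [v vS]] := set_0Vmem S; first by rewrite cards0.
have [vA cv] : v \in A /\ c \in L v by move: vS; rewrite inE => /andP.
have greedy_v : greedy_choice c L v = c by rewrite /greedy_choice cv.
have sub : S :\ v \subset
    [set u | gadj v u && (greedy_choice c L u == greedy_choice c L v)].
  apply/subsetP => u; rewrite !inE => /and3P [uv uA cu].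
  by rewrite greedy_v /greedy_choice cu eqxx A_clique // eq_sym.
rewrite (cardsD1 v) vS add1n ltnS.
have greedy_in u : greedy_choice c L u \in L u by exact: greedy_choice_in.
exact: leq_trans (subset_leq_card sub) (L_defective greedy_in v).
Qed.

Lemma sum_card_lists :
  \sum_(v in A) #|L v| = \sum_(c : 'I_alpha) #|[set v in A | c \in L v]|.
Proof.
transitivity (\sum_(v in A) \sum_(c : 'I_alpha) (c \in L v)).
  by apply: eq_bigr => v _; rewrite -sum1_card big_mkcond.
rewrite exchange_big; apply: eq_bigr => c _.
rewrite -sum1_card [RHS]big_mkcond [LHS]big_mkcond.
by apply: eq_bigr => v _; rewrite inE; case: (v \in A).
Qed.

Lemma clique_sol_domain_size_le : #|A| * sol_domain_size L <= alpha * p.+1.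
Proof.
rewrite -sum_nat_const -[alpha in alpha * _]card_ord -sum_nat_const.
apply: (@leq_trans (\sum_(v in A) #|L v|)).
  by apply: leq_sum => v _; apply: sol_domain_size_le.
by rewrite sum_card_lists; apply: leq_sum => c _; apply: card_clique_listing_le.
Qed.

End CliqueListColouring.

Theorem theorem4 :
  exists C : rat, (0 < C)%R /\
  forall Delta p alpha : nat, 1 <= Delta -> 1 <= p -> 1 <= alpha ->
  exists F : sgraph -> Prop,
    (forall N : nat, exists G, F G /\ N < gn G) /\
    (forall G, F G -> maxdeg G = Delta) /\
    (forall G, F G ->
       forall L : 'I_(gn G) -> {set 'I_alpha},
         (forall v, L v != set0) ->
         (forall phi : 'I_(gn G) -> 'I_alpha,
             (forall v, phi v \in L v) -> @p_defective G p alpha phi) ->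
         ((@sol_domain_size G alpha L)%:R <= C * alpha%:R * p%:R / Delta%:R)%R).
Proof.
exists 2%R; split => // D p a D_gt0 p_gt0 _.
exists (fun G => exists n (A : {set 'I_n}), #|A| = D.+1 /\ G = clique_graph A).
split; [|split].
- move=> N; have [A cardA] := @exists_set_card (N + D.+1) D.+1 (leq_addl _ _).
  by exists (clique_graph A); split; [exists _, A | rewrite /=; lia].
- move=> _ [n [A [cardA ->]]].
  by rewrite maxdeg_clique_graph ?cardA // -card_gt0 cardA.
move=> _ [n [A [cardA ->]]] L L_neq0 L_defective.
have := clique_sol_domain_size_le L_neq0 L_defective (@is_clique_graph n A).
rewrite cardA; set m := sol_domain_size L => bound.
have {}bound : m * D <= 2 * a * p by nia.
by rewrite ler_pdivlMr ?ltr0n // -!natrM ler_nat.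
Qed.
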